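(* Let $R\subseteq\mathbb N$ be a congruence-periodic sparse predicate, $d\in\mathbb N^+$, $\tilde R\subseteq^dR$, $n\in\mathbb N^+$, $\mathbf A$ an $n$-tuple of operators all $\neq_R0$, and $\Delta\in d\mathbb N$ sufficiently large. Then the formula $\phi(x;y_1,y_2):=\big(P^1_\Delta(x-y_1;\mathbf A,\tilde R)=y_2\big)$, with $|x|=1$, has a strong honest definition in $(\mathbb Z,<,+,R)$.
   Context: Let $R\subseteq\mathbb N$ be infinite, enumerated increasingly as $(r_n)$; $\sigma:R\to R$ is the successor map, $\sigma^k$ its iterate. An operator on $R$ is $z\mapsto\sum_{i=0}^ma_i\sigma^i(z)$, $a_i\in\mathbb Z$. $A=_R0$: $Az=0$ for all $z\in R$; $A>_R0$ (resp. $<_R0$): $Az>0$ (resp. $<0$) for cofinitely many $z$. $R$ sparse: every operator satisfies (S1) $A=_R0$ or $A>_R0$ or $A<_R0$; (S2) if $A>_R0$ there is $\Delta$ with $A(\sigma^\Delta z)>z$ for all $z$. Congruence-periodic: $(r_n\bmod m)$ eventually periodic for each $m\ge1$. $\tilde R\subseteq^dR$: $\tilde R=\{r_{N+dt}:t\in\mathbb N\}$ for some $N$. $\mathbf A\cdot z=\sum A_iz_i$, $\mathbf A\cdot S=\{\mathbf A\cdot z:z\in S\}$. $\tilde R^n_\Delta=\{z\in\tilde R^n:z_i\ge\sigma^\Delta z_{i+1}\ (1\le i\le n)\}$, $z_{n+1}:=\min\tilde R$. For $\mathbf A$ with entries $\neq_R0$ and $\Delta$ large enough that $z\mapsto\mathbf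 A\cdot z$ is injective on $R^n_\Delta$, $P_\Delta(x;\mathbf A,\tilde R)$ is the $z\in\tilde R^n_\Delta$ with largest $\mathbf A\cdot z$ subject to $\mathbf A\cdot z<x$ if $x>\inf\mathbf A\cdot\tilde R^n_\Delta$, and otherwise the $z\in\tilde R^n_\Delta$ minimising $\mathbf A\cdot z$; $P^1_\Delta$ is its first coordinate (an $\{<,+,R\}$-definable function). A strong honest definition for $\phi(x;y)$ in $\mathcal M=(\mathbb Z,<,+,R)$ is a formula $\psi(x;y^{(1)},\dots,y^{(k)})$ such that for every $a$ and finite $B\subseteq\mathbb Z^{|y|}$, $|B|\ge2$, there is $c\in B^k$ with $\mathcal M\models\psi(a;c)$ and for all $a'\models\psi(x;c)$ and $b\in B$: $\phi(a;b)\leftrightarrow\phi(a';b)$. ''$\Delta$ sufficiently large'' means $\Delta\ge\Delta_0$ for some suitable $\Delta_0$. *)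

From Stdlib Require Import ZArith List Arith.
Import ListNotations.
Open Scope Z_scope.

(** * The predicate R, given by its increasing enumeration r : nat -> nat.
    R = { r n | n in nat } is an infinite subset of N. *)
Definition strictly_increasing (r : nat -> nat) : Prop :=
  forall m n : nat, (m < n)%nat -> (r m < r n)%nat.

Definition inR (r : nat -> nat) (z : Z) : Prop := exists k : nat, Z.of_nat (r k) = z.

(** Successor map: sigma (r k) = r (k+1), hence sigma^j (r k) = r (k+j). *)

(** An operator z |-> sum_{i=0}^m a_i sigma^i(z) is given by its coefficient list
    [a_0; ...; a_m].  [op_at r a k] is its value at z = r k. *)
Fixpoint op_at (r : nat -> nat) (a : list Z) (k : nat) : Z :=
  match a with
  | [] => 0
  | c :: a' => c * Z.of_nat (r k) + op_at r a' (S k)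
  end.

Definition op_zero (r : nat -> nat) (a : list Z) : Prop :=
  forall k : nat, op_at r a k = 0.
Definition op_pos (r : nat -> nat) (a : list Z) : Prop :=
  exists K : nat, forall k : nat, (K <= k)%nat -> op_at r a k > 0.
Definition op_neg (r : nat -> nat) (a : list Z) : Prop :=
  exists K : nat, forall k : nat, (K <= k)%nat -> op_at r a k < 0.

Definition sparse (r : nat -> nat) : Prop :=
  forall a : list Z,
    (op_zero r a \/ op_pos r a \/ op_neg r a) /\
    (op_pos r a -> exists Delta : nat, forall k : nat,
        op_at r a (k + Delta)%nat > Z.of_nat (r k)).

Definition congruence_periodic (r : nat -> nat) : Prop :=
  forall m : nat, (1 <= m)%nat ->
    exists (N p : nat), (1 <= p)%nat /\
      forall n : nat, (N <= n)%nat -> (Nat.modulo (r (n + p)) m = Nat.modulo (r n) m)%nat.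

(** * R~ = { r_{N + d t} : t in N }  (R~ subset^d R), and R~^n_Delta.
    An element z of R~^n is represented by the list ks of indices with z_i = r (ks_i)
    (r is injective, so this is a bijection).  The extra coordinate
    z_{n+1} := min R~ = r N is appended. *)
Definition in_tilde_n_Delta (r : nat -> nat) (N d n Delta : nat) (ks : list nat) : Prop :=
  length ks = n /\
  (forall i : nat, (i < n)%nat -> exists t : nat, nth i ks 0%nat = (N + d * t)%nat) /\
  (forall i : nat, (i < n)%nat ->
     (r (nth i (ks ++ [N]) 0%nat) >= r (nth (S i) (ks ++ [N]) 0%nat + Delta))%nat).

Fixpoint dot (r : nat -> nat) (As : list (list Z)) (ks : list nat) : Z :=
  match As, ks with
  | a :: As', k :: ks' => op_at r a k + dot r As' ks'
  | _, _ => 0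
  end.

(** Relational rendering of the
    definition; for Delta large (injectivity of z |-> A.z) it is a functional relation.
    Note: for a set S of integers, x > inf S iff some element of S is < x. *)
Definition isP (r : nat -> nat) (N d n Delta : nat) (As : list (list Z)) (x : Z)
    (ks : list nat) : Prop :=
  in_tilde_n_Delta r N d n Delta ks /\
  ((exists ks', in_tilde_n_Delta r N d n Delta ks' /\ dot r As ks' < x) ->
     dot r As ks < x /\
     forall ks', in_tilde_n_Delta r N d n Delta ks' -> dot r As ks' < x ->
                 dot r As ks' <= dot r As ks) /\
  (~ (exists ks', in_tilde_n_Delta r N d n Delta ks' /\ dot r As ks' < x) ->
     forall ks', in_tilde_n_Delta r N d n Delta ks' -> dot r As ks <= dot r As ks').

Definition phiP (r : nat -> nat) (N d n Delta : nat) (As : list (list Z))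
    (x y1 y2 : Z) : Prop :=
  exists ks, isP r N d n Delta As (x - y1) ks /\ Z.of_nat (r (nth 0 ks 0%nat)) = y2.

Inductive term : Type :=
  | TVar : nat -> term
  | TPlus : term -> term -> term.

Inductive form : Type :=
  | FLt : term -> term -> form
  | FEq : term -> term -> form
  | FR : term -> form
  | FNot : form -> form
  | FAnd : form -> form -> form
  | FEx : nat -> form -> form.

Fixpoint eval_term (e : nat -> Z) (t : term) : Z :=
  match t with
  | TVar i => e i
  | TPlus t1 t2 => eval_term e t1 + eval_term e t2
  end.

Definition update (e : nat -> Z) (i : nat) (v : Z) : nat -> Z :=
  fun j => if Nat.eqb j i then v else e j.

Fixpoint sat (r : nat -> nat) (e : nat -> Z) (f : form) : Prop :=
  match f with
  | FLt t1 t2 => eval_term e t1 < eval_term e t2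
  | FEq t1 t2 => eval_term e t1 = eval_term e t2
  | FR t => inR r (eval_term e t)
  | FNot f1 => ~ sat r e f1
  | FAnd f1 f2 => sat r e f1 /\ sat r e f2
  | FEx i f1 => exists v : Z, sat r (update e i v) f1
  end.

(** Assignment for psi(x; y^(1), ..., y^(k)) with |x| = 1, |y^(j)| = 2:
    variable 0 is x, variables 2j+1, 2j+2 are the two coordinates of y^(j+1)
    (j < k); all other variables are assigned 0 (0 is 0-definable, so this is
    harmless). *)
Definition env (a : Z) (c : list (Z * Z)) : nat -> Z :=
  fun i => match i with
           | O => a
           | S i' => match nth_error c (Nat.div i' 2) with
                     | Some (y1, y2) => if Nat.eqb (Nat.modulo i' 2) 0 then y1 else y2
                     | None => 0
                     end
           end.

Definition has_strong_honest_def (r : nat -> nat) (phi : Z -> Z -> Z -> Prop) : Prop :=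
  exists (k : nat) (psi : form),
    forall (a : Z) (B : list (Z * Z)),
      NoDup B -> (2 <= length B)%nat ->
      exists c : list (Z * Z),
        length c = k /\ (forall y, In y c -> In y B) /\
        sat r (env a c) psi /\
        forall a' : Z, sat r (env a' c) psi ->
          forall b : Z * Z, In b B -> (phi a (fst b) (snd b) <-> phi a' (fst b) (snd b)).

(* Sparseness makes every operator A <>_R 0 eventually of constant sign and makes its increments
   along R dominate any fixed multiple of much smaller elements of R.  Hence, for Delta large,
   tuples of R~^n_Delta with a larger head r_k have a larger value A.z (smaller, if A_1 <_R 0),
   and for a fixed head an explicit greedy tuple attains the least value.  So the head of
   P_Delta(u) is the last (resp. first) admissible k for which some tuple with head r_k has
   A.z < u, and phi(x; y) is determined, uniformly in y, by three formulas S(x; y) of the form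
   "some tuple with head y_2 moved j steps along R has y_1 + A.z < x", each upward closed in x.
   An upward closed family S has a strong honest definition: for a and B take the b in B with
   S(a; b) whose ray {x | S(x; b)} is smallest, and the b with ~ S(a; b) whose ray is largest;
   a further pair of parameters, equal or distinct, switches each choice on or off. *)

From Stdlib Require Import ZArith List Arith.
From Stdlib Require Import Lia Classical.
Import ListNotations.
Open Scope Z_scope.

Lemma Z_max_of_bounded (P : Z -> Prop) u z0 : P z0 -> (forall z, P z -> z < u) ->
  exists z, P z /\ forall z', P z' -> z' <= z.
Proof.
  intros h0 hb; remember (Z.to_nat (u - z0)) as m eqn:Em; revert z0 h0 Em.
  induction m as [m IH] using (well_founded_induction lt_wf); intros z0 h0 Em.
  destruct (classic (exists z', P z' /\ z0 < z')) as [[z' [h1 h2]]|NE].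
  - apply (IH (Z.to_nat (u - z'))) with z'; auto; pose proof (hb z' h1); lia.
  - exists z0; split; auto; intros z' h'; apply Z.nlt_ge; intros hl; apply NE; eauto.
Qed.

Lemma Z_min_of_bounded (P : Z -> Prop) l z0 : P z0 -> (forall z, P z -> l <= z) ->
  exists z, P z /\ forall z', P z' -> z <= z'.
Proof.
  intros h0 hb.
  destruct (Z_max_of_bounded (fun z => P (- z)) (- l + 1) (- z0)) as [z [h1 h2]].
  - now rewrite Z.opp_involutive.
  - intros z hz; specialize (hb _ hz); lia.
  - exists (- z); split; auto; intros z' hz'; specialize (h2 (- z')); rewrite Z.opp_involutive in h2.
    specialize (h2 hz'); lia.
Qed.

Section Enumeration.

Variable r : nat -> nat.
Hypothesis Hr : strictly_increasing r.

Lemma r_lt_iff a b : (r a < r b)%nat <-> (a < b)%nat.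
Proof.
  split; intro h; [|exact (Hr a b h)].
  destruct (Nat.lt_ge_cases a b) as [|hba]; [assumption|].
  destruct (Nat.eq_dec a b) as [->|]; [lia|].
  pose proof (Hr b a ltac:(lia)); lia.
Qed.

Lemma r_le_iff a b : (r a <= r b)%nat <-> (a <= b)%nat.
Proof. pose proof (r_lt_iff b a); lia. Qed.

Lemma r_inj a b : Z.of_nat (r a) = Z.of_nat (r b) -> a = b.
Proof. intros e; apply Nat2Z.inj in e; pose proof (r_le_iff a b); pose proof (r_le_iff b a); lia. Qed.

Lemma le_r k : (k <= r k)%nat.
Proof. induction k; [lia|]. pose proof (Hr k (S k) ltac:(lia)); lia. Qed.

End Enumeration.

Definition op_opp (a : list Z) : list Z := map Z.opp a.

Fixpoint op_sub (a b : list Z) : list Z :=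
  match a, b with
  | x :: a', y :: b' => (x - y) :: op_sub a' b'
  | _, [] => a
  | [], _ => op_opp b
  end.

(* The operator [z |-> A (sigma z) - A z]. *)
Definition op_diff (a : list Z) : list Z := op_sub (0 :: a) a.

Fixpoint op_norm (a : list Z) : Z :=
  match a with [] => 0 | c :: a' => Z.abs c + op_norm a' end.

Fixpoint ops_norm (As : list (list Z)) : Z :=
  match As with [] => 0 | a :: As' => op_norm a + ops_norm As' end.

Fixpoint ops_max_length (As : list (list Z)) : nat :=
  match As with [] => 0%nat | a :: As' => Nat.max (length a) (ops_max_length As') end.

Lemma op_norm_nonneg a : 0 <= op_norm a.
Proof. induction a; simpl; lia. Qed.

Lemma ops_norm_nonneg As : 0 <= ops_norm As.
Proof. induction As as [|a]; simpl; [lia|]. pose proof (op_norm_nonneg a); lia. Qed.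

Section Operators.

Variable r : nat -> nat.
Hypothesis Hr : strictly_increasing r.

Lemma op_at_opp a k : op_at r (op_opp a) k = - op_at r a k.
Proof. revert k; induction a; intros k; simpl; [lia|]. rewrite IHa; lia. Qed.

Lemma op_at_sub a b k : op_at r (op_sub a b) k = op_at r a k - op_at r b k.
Proof.
  revert b k; induction a as [|x a IH]; intros [|y b] k; simpl; try lia.
  - rewrite op_at_opp; simpl; lia.
  - rewrite IH; lia.
Qed.

Lemma op_at_diff a k : op_at r (op_diff a) k = op_at r a (S k) - op_at r a k.
Proof. unfold op_diff; rewrite op_at_sub; simpl; lia. Qed.

Lemma op_pos_opp a : op_neg r a -> op_pos r (op_opp a).
Proof. intros [K HK]; exists K; intros k hk; rewrite op_at_opp; specialize (HK k hk); lia. Qed.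

Lemma op_pos_neg_excl a : op_pos r a -> op_neg r a -> False.
Proof. intros [K1 h1] [K2 h2]; specialize (h1 (K1 + K2)%nat); specialize (h2 (K1 + K2)%nat); lia. Qed.

Lemma op_at_bound a k L : (length a <= L)%nat ->
  Z.abs (op_at r a k) <= op_norm a * Z.of_nat (r (k + L)%nat).
Proof.
  revert k L; induction a as [|c a IH]; intros k [|L] hl; simpl in *; try lia.
  specialize (IH (S k) L ltac:(lia)); rewrite Nat.add_succ_comm in IH.
  pose proof (proj2 (r_le_iff r Hr k (k + S L)) ltac:(lia)).
  assert (Z.abs (c * Z.of_nat (r k)) <= Z.abs c * Z.of_nat (r (k + S L)%nat))
    by (rewrite Z.abs_mul, (Z.abs_eq (Z.of_nat _)) by lia; nia).
  lia.
Qed.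

Lemma dot_bound Cs t M L : (ops_max_length Cs <= L)%nat -> (forall x, In x t -> (x <= M)%nat) ->
  Z.abs (dot r Cs t) <= ops_norm Cs * Z.of_nat (r (M + L)%nat).
Proof.
  revert t; induction Cs as [|a Cs IH]; intros t hL hM; simpl in *; [lia|].
  pose proof (ops_norm_nonneg Cs); pose proof (op_norm_nonneg a).
  destruct t as [|x t]; [nia|].
  specialize (IH t ltac:(lia) (fun y hy => hM y (or_intror hy))).
  pose proof (op_at_bound a x L ltac:(lia)).
  pose proof (proj2 (r_le_iff r Hr (x + L) (M + L)) ltac:(specialize (hM x (or_introl eq_refl)); lia)).
  nia.
Qed.

Hypothesis Hs : sparse r.

Lemma r_growth (C : Z) : exists G : nat, forall j, C * Z.of_nat (r j) < Z.of_nat (r (j + G)%nat).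
Proof.
  destruct (Hs [-1; 1]) as [_ S2].
  destruct S2 as [D1 HD1].
  { exists 0%nat; intros k _; cbn [op_at]; pose proof (Hr k (S k) ltac:(lia)); lia. }
  assert (Hdouble : forall k, 2 * Z.of_nat (r k) < Z.of_nat (r (k + S D1)%nat)).
  { intros k; specialize (HD1 k); cbn [op_at] in HD1.
    rewrite <- Nat.add_succ_comm; cbn [Nat.add] in *.
    pose proof (proj2 (r_le_iff r Hr k (k + D1)) ltac:(lia)); lia. }
  assert (Hpow : forall t k, 2 ^ Z.of_nat (S t) * Z.of_nat (r k) < Z.of_nat (r (k + S t * S D1)%nat)).
  { induction t; intros k.
    - specialize (Hdouble k); rewrite Nat.mul_1_l; lia.
    - specialize (IHt k); specialize (Hdouble (k + S t * S D1)%nat).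
      replace (k + S (S t) * S D1)%nat with (k + S t * S D1 + S D1)%nat by lia.
      rewrite Nat2Z.inj_succ, Z.pow_succ_r by lia; nia. }
  exists (S (Z.to_nat C) * S D1)%nat; intros j.
  specialize (Hpow (Z.to_nat C) j).
  pose proof (Z.pow_gt_lin_r 2 (Z.of_nat (S (Z.to_nat C))) ltac:(lia) ltac:(lia)).
  nia.
Qed.

Lemma not_op_pos_of_nonincreasing a K :
  (forall k, (K <= k)%nat -> op_at r a (S k) <= op_at r a k) -> ~ op_pos r a.
Proof.
  intros Hmono hp; destruct (proj2 (Hs a) hp) as [Da HDa].
  assert (Hbound : forall k, (K <= k)%nat -> op_at r a k <= op_at r a K).
  { intros k hk; induction hk; [lia|]; specialize (Hmono m hk); lia. }
  set (k := (K + Z.to_nat (Z.abs (op_at r a K)))%nat).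
  specialize (HDa k); specialize (Hbound (k + Da)%nat ltac:(unfold k; lia)).
  pose proof (le_r r Hr k); unfold k in *; lia.
Qed.

(* By (S2) a positive operator is unbounded along R, so by (S1) its difference must be positive. *)
Lemma op_diff_pos a : op_pos r a -> op_pos r (op_diff a).
Proof.
  intros hp; destruct (proj1 (Hs (op_diff a))) as [Z0|[P0|[K N0]]]; [exfalso| |exfalso]; auto.
  - apply (not_op_pos_of_nonincreasing a 0) in hp; [easy|].
    intros k _; specialize (Z0 k); rewrite op_at_diff in Z0; lia.
  - apply (not_op_pos_of_nonincreasing a K) in hp; [easy|].
    intros k hk; specialize (N0 k hk); rewrite op_at_diff in N0; lia.
Qed.

(* Along R a positive operator increases, between [r_k'] and [r_k], by more than any fixed multiple
   of [r_(k - D + L)]: by (S2) for its difference the increase exceeds [r_(k - 1 - Delta)], and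
   [r_growth] compares this with [C r_(k - D + L)] once [D] is large. *)
Lemma op_pos_gap a : op_pos r a -> forall (C : Z) (L : nat), exists D0 : nat,
  forall D k k', (D0 <= D)%nat -> (D0 <= k')%nat -> (k' < k)%nat ->
    C * Z.of_nat (r (k - D + L)%nat) < op_at r a k - op_at r a k'.
Proof.
  intros hp C L.
  destruct (op_diff_pos a hp) as [K1 HK1].
  destruct (proj2 (Hs (op_diff a)) (op_diff_pos a hp)) as [DB HDB].
  destruct (r_growth C) as [G HG].
  exists (K1 + DB + L + G + 1)%nat; intros D k k' hD hk' hlt.
  assert (Hmono : forall x y, (K1 <= x)%nat -> (x <= y)%nat -> op_at r a x <= op_at r a y).
  { intros x y hx hxy; induction hxy; [lia|].
    specialize (HK1 m ltac:(lia)); rewrite op_at_diff in HK1; lia. }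
  pose proof (Hmono k' (k - 1)%nat ltac:(lia) ltac:(lia)).
  specialize (HDB (k - 1 - DB)%nat); rewrite op_at_diff in HDB.
  replace (k - 1 - DB + DB)%nat with (k - 1)%nat in HDB by lia.
  replace (S (k - 1)) with k in HDB by lia.
  specialize (HG (k - D + L)%nat).
  pose proof (proj2 (r_le_iff r Hr (k - D + L + G) (k - 1 - DB)) ltac:(lia)).
  lia.
Qed.

Lemma ops_gap As : (forall a, In a As -> op_pos r a \/ op_neg r a) -> forall (C : Z) (L : nat),
  exists D0 : nat, forall a, In a As -> forall D k k', (D0 <= D)%nat -> (D0 <= k')%nat -> (k' < k)%nat ->
    (op_pos r a -> C * Z.of_nat (r (k - D + L)%nat) < op_at r a k - op_at r a k') /\
    (op_neg r a -> C * Z.of_nat (r (k - D + L)%nat) < op_at r a k' - op_at r a k).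
Proof.
  intros HA C L; induction As as [|a As IH]; [exists 0%nat; intros a []|].
  destruct IH as [D1 H1]; [intros b hb; apply HA; now right|].
  destruct (HA a (or_introl eq_refl)) as [hp|hn].
  - destruct (op_pos_gap a hp C L) as [Da HDa].
    exists (Nat.max Da D1); intros b [<-|hb] D k k' hD hk hl; [|apply H1; auto; lia].
    split; [intros _; apply HDa; lia|intros hn; now destruct (op_pos_neg_excl a)].
  - destruct (op_pos_gap _ (op_pos_opp a hn) C L) as [Da HDa].
    exists (Nat.max Da D1); intros b [<-|hb] D k k' hD hk hl; [|apply H1; auto; lia].
    split; [intros hp; now destruct (op_pos_neg_excl a)|intros _].
    specialize (HDa D k k' ltac:(lia) ltac:(lia) hl); rewrite !op_at_opp in HDa; lia.
Qed.

End Operators.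

(* Index lists of R~^n_Delta: [k_1 > k_2 > ... > k_n], each gap at least [D], and [k_n >= N + D]. *)
Fixpoint gap_chain (D N : nat) (ks : list nat) : Prop :=
  match ks with
  | [] => True
  | k :: t => match t with
              | [] => (N + D <= k)%nat
              | k2 :: _ => (k2 + D <= k)%nat /\ gap_chain D N t
              end
  end.

Fixpoint lowest_chain (D N m : nat) : list nat :=
  match m with O => [] | S m' => (N + m * D)%nat :: lowest_chain D N m' end.

(* The tail after a head [top] that minimises [A . z] when [ss] lists the signs of the remaining
   operators: a positive operator wants the smallest possible index, which forces the lowest
   chain; a negative one wants the largest, [top - D]. *)
Fixpoint greedy_tail (D N : nat) (ss : list bool) (top : nat) : list nat :=
  match ss with
  | [] => []
  | s :: ss' => if s then lowest_chain D N (S (length ss'))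
                else (top - D)%nat :: greedy_tail D N ss' (top - D)
  end.

Definition best_chain (D N : nat) (ss : list bool) (k : nat) : list nat :=
  k :: greedy_tail D N (tl ss) k.

Section GapChains.

Variables D N : nat.

Lemma gap_chain_nth ks : gap_chain D N ks <->
  forall i, (i < length ks)%nat -> (nth (S i) (ks ++ [N]) 0 + D <= nth i (ks ++ [N]) 0)%nat.
Proof.
  induction ks as [|k [|k2 t] IH]; simpl.
  - split; [intros _ i h; lia|auto].
  - split; [intros h [|i] hi; simpl; lia|intros h; specialize (h 0%nat); simpl in h; lia].
  - rewrite IH; split.
    + intros [h1 h2] [|i] hi; [simpl; lia|apply h2; simpl in *; lia].
    + intros h; split; [apply (h 0%nat); lia|intros i hi; apply (h (S i)); simpl in *; lia].
Qed.

Lemma gap_chain_tail k t : gap_chain D N (k :: t) -> gap_chain D N t.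
Proof. destruct t; simpl; tauto. Qed.

Lemma gap_chain_head_ge ks m : gap_chain D N ks -> length ks = S m -> (N + S m * D <= nth 0 ks 0)%nat.
Proof.
  revert m; induction ks as [|k [|k2 t] IH]; intros m h hl; simpl in *; try discriminate.
  - injection hl as <-; lia.
  - destruct m as [|m]; [discriminate|]; injection hl as hl.
    specialize (IH m (proj2 h) ltac:(simpl; lia)); simpl in IH; lia.
Qed.

Lemma gap_chain_tail_le k t : gap_chain D N (k :: t) -> forall x, In x t -> (x + D <= k)%nat.
Proof.
  revert k; induction t as [|k2 t IH]; intros k hc x hx; [destruct hx|].
  destruct hx as [<-|hx]; simpl in hc; [tauto|].
  specialize (IH k2 (proj2 hc) x hx); lia.
Qed.

Lemma gap_chain_ge ks : gap_chain D N ks -> forall x, In x ks -> (N + D <= x)%nat.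
Proof.
  induction ks as [|k t IH]; intros h x hx; [destruct hx|].
  destruct hx as [<-|hx]; [|apply IH; auto; exact (gap_chain_tail k t h)].
  pose proof (gap_chain_head_ge (k :: t) (length t) h eq_refl); simpl in *; nia.
Qed.

Lemma lowest_chain_length m : length (lowest_chain D N m) = m.
Proof. induction m; simpl; auto. Qed.

Lemma lowest_chain_gap m : gap_chain D N (lowest_chain D N m).
Proof. induction m as [|[|m] IH]; simpl in *; [auto|lia|split; [nia|exact IH]]. Qed.

Lemma lowest_chain_unique m h t : gap_chain D N (h :: t) -> length t = m ->
  h = (N + S m * D)%nat -> h :: t = lowest_chain D N (S m).
Proof.
  revert h t; induction m as [|m IH]; intros h [|k2 t] hc hl hh; try discriminate.
  - now rewrite hh.
  - simpl in hl, hc; injection hl as hl; destruct hc as [h1 h2].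
    pose proof (gap_chain_head_ge (k2 :: t) m h2 ltac:(simpl; auto)) as hk2; simpl in hk2.
    rewrite (IH k2 t h2 hl ltac:(nia)); simpl; f_equal; lia.
Qed.

Lemma greedy_tail_length ss top : length (greedy_tail D N ss top) = length ss.
Proof.
  revert top; induction ss as [|[] ss IH]; intros top; simpl; auto.
  now rewrite lowest_chain_length.
Qed.

Lemma greedy_tail_gap ss top : (N + S (length ss) * D <= top)%nat ->
  gap_chain D N (top :: greedy_tail D N ss top).
Proof.
  revert top; induction ss as [|[] ss IH]; intros top h; simpl in *; [lia| |].
  - pose proof (lowest_chain_gap (S (length ss))); simpl in *; split; [nia|auto].
  - split; [lia|apply IH; nia].
Qed.

Lemma best_chain_gap ss k : (1 <= length ss)%nat -> (N + length ss * D <= k)%nat ->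
  gap_chain D N (best_chain D N ss k) /\ length (best_chain D N ss k) = length ss.
Proof.
  intros hl hk; destruct ss as [|s ss]; simpl in *; [lia|].
  rewrite greedy_tail_length; split; [apply greedy_tail_gap; nia|auto].
Qed.

Variable d : nat.
Hypothesis Hd : (1 <= d)%nat.
Variable q : nat.
Hypothesis Hq : D = (d * q)%nat.

Lemma lowest_chain_progression m x : In x (lowest_chain D N m) -> exists t, x = (N + d * t)%nat.
Proof.
  induction m as [|m IH]; simpl; [easy|].
  intros [<-|hx]; [exists (S m * q)%nat; rewrite Hq; nia|auto].
Qed.

Lemma greedy_tail_progression ss top t0 : (N + S (length ss) * D <= top)%nat -> top = (N + d * t0)%nat ->
  forall x, In x (greedy_tail D N ss top) -> exists t, x = (N + d * t)%nat.
Proof.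
  revert top t0; induction ss as [|[] ss IH]; intros top t0 h ht x hx;
    [easy|exact (lowest_chain_progression _ x hx)|].
  simpl in *; rewrite Hq in *; assert (q <= t0)%nat by nia.
  destruct hx as [<-|hx]; [exists (t0 - q)%nat|apply (IH (top - d * q)%nat (t0 - q)%nat); auto; try nia];
    subst; rewrite Nat.mul_sub_distr_l; nia.
Qed.

End GapChains.

Definition op_sign (r : nat -> nat) (a : list Z) (s : bool) : Prop :=
  if s then op_pos r a else op_neg r a.

Lemma op_signs_exist r As : sparse r -> (forall a, In a As -> ~ op_zero r a) ->
  exists ss, Forall2 (op_sign r) As ss.
Proof.
  intros Hs; induction As as [|a As IH]; intros H; [exists []; constructor|].
  destruct IH as [ss hss]; [intros b hb; apply H; now right|].
  destruct (proj1 (Hs a)) as [hz|[hp|hn]]; [now destruct (H a (or_introl eq_refl))| |];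
    [exists (true :: ss)|exists (false :: ss)]; constructor; auto.
Qed.

Lemma op_sign_cases r As ss : Forall2 (op_sign r) As ss -> forall a, In a As -> op_pos r a \/ op_neg r a.
Proof. induction 1 as [|a [] As ss]; intros b hb; [destruct hb|..]; destruct hb as [<-|hb]; auto. Qed.

Definition head_dominates (r : nat -> nat) (D N : nat) (a : list Z) (Cs : list (list Z)) : Prop :=
  forall h t h' t', gap_chain D N (h :: t) -> gap_chain D N (h' :: t') ->
    length t = length Cs -> length t' = length Cs -> (h' < h)%nat ->
    (op_pos r a -> dot r (a :: Cs) (h' :: t') < dot r (a :: Cs) (h :: t)) /\
    (op_neg r a -> dot r (a :: Cs) (h :: t) < dot r (a :: Cs) (h' :: t')).

Fixpoint dominated (r : nat -> nat) (D N : nat) (As : list (list Z)) : Prop :=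
  match As with
  | [] => True
  | a :: Cs => head_dominates r D N a Cs /\ dominated r D N Cs
  end.

Section Domination.

Variable r : nat -> nat.
Hypothesis Hr : strictly_increasing r.

Lemma head_dominates_of_gap D N a Cs S L :
  (forall k k', (D <= k')%nat -> (k' < k)%nat ->
    (op_pos r a -> 2 * S * Z.of_nat (r (k - D + L)%nat) < op_at r a k - op_at r a k') /\
    (op_neg r a -> 2 * S * Z.of_nat (r (k - D + L)%nat) < op_at r a k' - op_at r a k)) ->
  ops_norm Cs <= S -> (ops_max_length Cs <= L)%nat -> head_dominates r D N a Cs.
Proof.
  intros Hgap HS HL h t h' t' hc hc' _ _ hlt.
  pose proof (gap_chain_ge D N _ hc' h' (or_introl eq_refl)).
  destruct (Hgap h h' ltac:(lia) hlt) as [P1 P2].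
  assert (B := dot_bound r Hr Cs t (h - D)%nat L HL
    (fun x hx => ltac:(pose proof (gap_chain_tail_le D N h t hc x hx); lia))).
  assert (B' := dot_bound r Hr Cs t' (h' - D)%nat L HL
    (fun x hx => ltac:(pose proof (gap_chain_tail_le D N h' t' hc' x hx); lia))).
  pose proof (proj2 (r_le_iff r Hr (h' - D + L) (h - D + L)) ltac:(lia)).
  pose proof (ops_norm_nonneg Cs).
  set (X := Z.of_nat (r (h - D + L)%nat)) in *; set (X' := Z.of_nat (r (h' - D + L)%nat)) in *.
  assert (ops_norm Cs * X' <= S * X) by nia.
  assert (ops_norm Cs * X <= S * X) by nia.
  cbn [dot]; split; intros hs; [specialize (P1 hs)|specialize (P2 hs)]; lia.
Qed.

Hypothesis Hs : sparse r.

(* The constants come from the whole list, so they serve for every suffix. *)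
Lemma dominated_eventually As : (forall a, In a As -> op_pos r a \/ op_neg r a) ->
  exists D0 : nat, forall D N, (D0 <= D)%nat -> dominated r D N As.
Proof.
  intros HA.
  destruct (ops_gap r Hr Hs As HA (2 * ops_norm As) (ops_max_length As)) as [D0 H0].
  exists D0; intros D N hD.
  enough (H : forall Cs, (forall a, In a Cs -> In a As) -> ops_norm Cs <= ops_norm As ->
            (ops_max_length Cs <= ops_max_length As)%nat -> dominated r D N Cs)
    by (apply H; auto; lia).
  induction Cs as [|a Cs IH]; intros hin hS hL; simpl in *; [easy|].
  pose proof (op_norm_nonneg a); pose proof (ops_norm_nonneg Cs).
  split; [|apply IH; auto; lia].
  apply (head_dominates_of_gap D N a Cs (ops_norm As) (ops_max_length As)); [|lia|lia].
  intros k k' hk hlt; apply (H0 a (hin a (or_introl eq_refl))); lia.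
Qed.

End Domination.

Section BestChain.

Variable r : nat -> nat.
Variables D N : nat.

Lemma greedy_tail_min Bs ss : Forall2 (op_sign r) Bs ss -> dominated r D N Bs ->
  forall top t, length t = length Bs -> gap_chain D N (top :: t) -> (N + S (length Bs) * D <= top)%nat ->
  dot r Bs (greedy_tail D N ss top) <= dot r Bs t.
Proof.
  induction 1 as [|b s Bs ss hs HF IH]; intros HD top t hl hc htop; [destruct t; simpl; lia|].
  destruct HD as [Dm HDm], t as [|j t]; [discriminate|].
  simpl in hl, hc; injection hl as hl; destruct hc as [hj hc].
  pose proof (Forall2_length HF) as Hlen.
  destruct s; cbn [greedy_tail]; unfold op_sign in hs.
  - pose proof (gap_chain_head_ge D N (j :: t) (length Bs) hc ltac:(simpl; auto)) as Hj; simpl in Hj.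
    rewrite <- Hlen.
    destruct (Nat.eq_dec j (N + S (length Bs) * D)) as [E|E].
    + rewrite <- (lowest_chain_unique D N (length Bs) j t hc hl E); lia.
    + apply Z.lt_le_incl, (Dm j t _ _ hc (lowest_chain_gap D N (S (length Bs))) hl); auto;
        [now rewrite lowest_chain_length|simpl; lia].
  - destruct (Nat.eq_dec j (top - D)) as [->|E].
    + cbn [dot]; apply Z.add_le_mono_l, IH; auto; simpl in htop; nia.
    + assert (Hg := greedy_tail_gap D N ss (top - D) ltac:(rewrite <- Hlen; simpl in htop; nia)).
      apply Z.lt_le_incl, (Dm _ _ j t Hg hc);
        auto; [now rewrite greedy_tail_length|lia].
Qed.

Lemma best_chain_min As ss : Forall2 (op_sign r) As ss -> dominated r D N As ->
  forall ks, gap_chain D N ks -> length ks = length As ->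
  dot r As (best_chain D N ss (nth 0 ks 0%nat)) <= dot r As ks.
Proof.
  intros HF HD [|k t] hc hl; [destruct HF; simpl in *; [lia|discriminate]|].
  destruct HF as [|a s As ss hs HF]; [discriminate|].
  simpl in hl; injection hl as hl; unfold best_chain; cbn [dot nth tl].
  apply Z.add_le_mono_l, (greedy_tail_min As ss HF (proj2 HD)); auto.
  pose proof (gap_chain_head_ge D N (k :: t) (length t) hc eq_refl); simpl in *; nia.
Qed.

End BestChain.

Definition chain_below (r : nat -> nat) (D N : nat) (As : list (list Z)) (k : nat) (u : Z) : Prop :=
  exists ks, gap_chain D N ks /\ length ks = length As /\ nth 0 ks 0%nat = k /\ dot r As ks < u.

Lemma chain_below_mono r D N As k u u' : u <= u' -> chain_below r D N As k u -> chain_below r D N As k u'.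
Proof. intros h [ks [? [? [? ?]]]]; exists ks; repeat split; auto; lia. Qed.

Lemma in_tilde_iff r N d n D ks : strictly_increasing r ->
  in_tilde_n_Delta r N d n D ks <->
  length ks = n /\ (forall i, (i < n)%nat -> exists t, nth i ks 0%nat = (N + d * t)%nat) /\ gap_chain D N ks.
Proof.
  intros Hr; unfold in_tilde_n_Delta; rewrite gap_chain_nth.
  split; intros [h1 [h2 h3]]; repeat split; auto; intros i hi; apply (r_le_iff r Hr), h3; lia.
Qed.

Definition shifted_family (r : nat -> nat) (D N : nat) (As : list (list Z)) (j : nat) (x y1 y2 : Z) : Prop :=
  exists k, y2 = Z.of_nat (r k) /\ chain_below r D N As (k + j) (x - y1).

Definition lowered_family (r : nat -> nat) (D N : nat) (As : list (list Z)) (j : nat) (x y1 y2 : Z) : Prop :=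
  exists k, y2 = Z.of_nat (r (k + j)%nat) /\ chain_below r D N As k (x - y1).

Definition upward_closed (S : Z -> Z -> Z -> Prop) : Prop :=
  forall x x' y1 y2, x <= x' -> S x y1 y2 -> S x' y1 y2.

Lemma shifted_family_upward r D N As j : upward_closed (shifted_family r D N As j).
Proof.
  intros x x' y1 y2 h [k [e hk]]; exists k; split; [exact e|]; revert hk; apply chain_below_mono; lia.
Qed.

Lemma lowered_family_upward r D N As j : upward_closed (lowered_family r D N As j).
Proof.
  intros x x' y1 y2 h [k [e hk]]; exists k; split; [exact e|]; revert hk; apply chain_below_mono; lia.
Qed.

Section Head.

Variable r : nat -> nat.
Hypothesis Hr : strictly_increasing r.
Variables d q D N : nat.
Hypothesis Hd : (1 <= d)%nat.
Hypothesis Hq : D = (d * q)%nat.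
Variables (a : list Z) (Cs : list (list Z)) (ss : list bool).
Let As := a :: Cs.
Hypothesis HF : Forall2 (op_sign r) As ss.
Hypothesis HDm : dominated r D N As.

Let kmin := (N + length As * D)%nat.

Definition admissible (k : nat) : Prop := (exists t, k = (N + d * t)%nat) /\ (kmin <= k)%nat.

Let tilde := in_tilde_n_Delta r N d (length As) D.
Let value (k : nat) : Z := dot r As (best_chain D N ss k).

Lemma admissible_min : admissible kmin.
Proof. split; [exists (length As * q)%nat; subst D kmin; nia|lia]. Qed.

Lemma admissible_succ k : admissible k -> admissible (k + d).
Proof. intros [[t ->] h]; split; [exists (S t); nia|lia]. Qed.

Lemma admissible_gap k k' : admissible k -> admissible k' -> (k < k')%nat -> (k + d <= k')%nat.
Proof. intros [[t ->] _] [[t' ->] _] h; assert (t < t')%nat by nia; nia. Qed.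

Lemma admissible_pred k : admissible k -> k <> kmin -> admissible (k - d) /\ (k - d + d = k)%nat.
Proof.
  intros [[t ->] h] hne; assert (length As * q < t)%nat by (subst D kmin; nia).
  split; [split; [exists (t - 1)%nat; rewrite Nat.mul_sub_distr_l|subst D kmin]|]; nia.
Qed.

Lemma head_admissible ks : tilde ks -> admissible (nth 0 ks 0%nat).
Proof.
  unfold tilde; rewrite (in_tilde_iff r N d _ D ks Hr); intros [h1 [h2 h3]]; split.
  - apply h2; simpl; lia.
  - exact (gap_chain_head_ge D N ks _ h3 h1).
Qed.

Lemma best_chain_tilde k : admissible k -> tilde (best_chain D N ss k).
Proof.
  intros [[t0 ht0] hk]; pose proof (Forall2_length HF) as hl.
  unfold tilde; rewrite (in_tilde_iff r N d _ D _ Hr).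
  destruct (best_chain_gap D N ss k) as [h1 h2]; [simpl in *; lia|rewrite <- hl; exact hk|].
  repeat split; [rewrite h2; auto| |auto].
  intros [|i] hi; [exists t0; auto|]; unfold best_chain; simpl nth.
  destruct ss as [|s ss']; [simpl in hl; lia|]; simpl tl in *.
  apply (greedy_tail_progression D N d Hd q Hq ss' k t0); auto; [unfold kmin, As in *; simpl in *; nia|].
  apply nth_In; rewrite greedy_tail_length; simpl in hl, hi; lia.
Qed.

Lemma chain_below_iff k u : (kmin <= k)%nat -> chain_below r D N As k u <-> value k < u.
Proof.
  intros hk; split.
  - intros [ks [h1 [h2 [<- h4]]]]; pose proof (best_chain_min r D N As ss HF HDm ks h1 h2); unfold value; lia.
  - intros h; exists (best_chain D N ss k); pose proof (Forall2_length HF) as hl.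
    destruct (best_chain_gap D N ss k) as [h1 h2]; [simpl in *; lia|rewrite <- hl; exact hk|].
    repeat split; auto; congruence.
Qed.

Lemma tilde_dominates ks ks' : tilde ks -> tilde ks' -> (nth 0 ks' 0 < nth 0 ks 0)%nat ->
  (op_pos r a -> dot r As ks' < dot r As ks) /\ (op_neg r a -> dot r As ks < dot r As ks').
Proof.
  unfold tilde; rewrite !(in_tilde_iff r N d _ D _ Hr).
  intros [g1 [_ g3]] [f1 [_ f3]] hlt.
  destruct ks as [|h t], ks' as [|h' t']; try discriminate; simpl in g1, f1, hlt.
  injection g1 as g1; injection f1 as f1; exact (proj1 HDm h t h' t' g3 f3 g1 f1 hlt).
Qed.

Lemma value_monotone k k' : admissible k -> admissible k' -> (k < k')%nat ->
  (op_pos r a -> value k < value k') /\ (op_neg r a -> value k' < value k).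
Proof. intros hk hk' hlt; apply tilde_dominates; auto using best_chain_tilde. Qed.

(* The first coordinate of [P_Delta(u)], read off from the truth of [chain_below] at [k] and at
   the neighbouring admissible index. *)
Definition head_condition (u : Z) (k : nat) : Prop :=
  admissible k /\
  (op_pos r a -> (chain_below r D N As k u \/ k = kmin) /\ ~ chain_below r D N As (k + d) u) /\
  (op_neg r a -> chain_below r D N As k u /\ (k = kmin \/ ~ chain_below r D N As (k - d) u)).

Let exists_below (u : Z) : Prop := exists ks, tilde ks /\ dot r As ks < u.

Lemma isP_head u ks : isP r N d (length As) D As u ks -> head_condition u (nth 0 ks 0%nat).
Proof.
  intros [hks [hE hNE]]; set (k := nth 0 ks 0%nat).
  assert (hk : admissible k) by exact (head_admissible ks hks).
  assert (hgap : gap_chain D N ks /\ length ks = length As)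
    by (unfold tilde in hks; rewrite (in_tilde_iff r N d _ D _ Hr) in hks; tauto).
  assert (Hbelow : exists_below u -> chain_below r D N As k u)
    by (intros Ex; exists ks; repeat split; try tauto; apply hE, Ex).
  assert (Hsucc : tilde (best_chain D N ss (k + d)))
    by exact (best_chain_tilde _ (admissible_succ k hk)).
  split; [exact hk|split; intros hsign].
  - split.
    + destruct (classic (exists_below u)) as [Ex|NEx]; [left; auto|right].
      apply NNPP; intros hne; destruct hk as [_ hk].
      specialize (hNE NEx _ (best_chain_tilde _ admissible_min)).
      destruct (tilde_dominates ks (best_chain D N ss kmin) hks (best_chain_tilde _ admissible_min)
        ltac:(simpl; lia)) as [g _]; specialize (g hsign); lia.
    + rewrite (chain_below_iff (k + d) u ltac:(destruct hk; lia)); intros hlt.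
      destruct (hE (ex_intro _ _ (conj Hsucc hlt))) as [_ hmax].
      specialize (hmax _ Hsucc hlt).
      destruct (tilde_dominates _ ks Hsucc hks ltac:(simpl; lia)) as [g _]; specialize (g hsign); lia.
  - assert (Ex : exists_below u).
    { apply NNPP; intros NEx; specialize (hNE NEx _ Hsucc).
      destruct (tilde_dominates _ ks Hsucc hks ltac:(simpl; lia)) as [_ g]; specialize (g hsign); lia. }
    split; [exact (Hbelow Ex)|].
    destruct (classic (k = kmin)) as [|hne]; [now left|right].
    destruct (admissible_pred k hk hne) as [hpred e].
    rewrite (chain_below_iff (k - d) u ltac:(destruct hpred; lia)); intros hlt.
    pose proof (best_chain_tilde _ hpred) as Hpred.
    specialize (proj2 (hE Ex) _ Hpred hlt).
    destruct (tilde_dominates ks _ hks Hpred ltac:(simpl; lia)) as [_ g]; specialize (g hsign); lia.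
Qed.

Lemma head_condition_lt u k k' : head_condition u k -> head_condition u k' -> ~ (k < k')%nat.
Proof.
  intros [hk [P N']] [hk' [P' N'']] hlt.
  assert (hstep := admissible_gap k k' hk hk' hlt).
  assert (hne : k' <> kmin) by (destruct hk; lia).
  assert (Hsign : op_pos r a \/ op_neg r a) by (inversion HF; unfold op_sign in *; destruct y; auto).
  destruct Hsign as [hsign|hsign].
  - destruct (P hsign) as [_ hnot], (P' hsign) as [[hbelow|] _]; [|contradiction].
    apply hnot; rewrite (chain_below_iff (k + d) u ltac:(destruct hk; lia)).
    rewrite (chain_below_iff k' u ltac:(destruct hk'; lia)) in hbelow.
    destruct (Nat.eq_dec (k + d) k') as [<-|]; [auto|].
    destruct (value_monotone (k + d) k' (admissible_succ k hk) hk' ltac:(lia)) as [g _].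
    specialize (g hsign); lia.
  - destruct (N' hsign) as [hbelow _], (N'' hsign) as [_ [|hnot]]; [contradiction|].
    destruct (admissible_pred k' hk' hne) as [hpred e].
    apply hnot; rewrite (chain_below_iff (k' - d) u ltac:(destruct hpred; lia)).
    rewrite (chain_below_iff k u ltac:(destruct hk; lia)) in hbelow.
    destruct (Nat.eq_dec k (k' - d)) as [<-|]; [auto|].
    destruct (value_monotone k (k' - d) hk hpred ltac:(lia)) as [_ g].
    specialize (g hsign); lia.
Qed.

Lemma head_condition_unique u k k' : head_condition u k -> head_condition u k' -> k = k'.
Proof.
  intros h h'; destruct (Nat.lt_trichotomy k k') as [hlt|[|hlt]]; auto; exfalso;
    [exact (head_condition_lt u k k' h h' hlt)|exact (head_condition_lt u k' k h' h hlt)].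
Qed.

Lemma isP_exists u : exists ks, isP r N d (length As) D As u ks.
Proof.
  pose proof (best_chain_tilde _ admissible_min) as Hmin.
  destruct (classic (exists_below u)) as [[ks0 [g1 g2]]|NEx].
  - destruct (Z_max_of_bounded (fun z => exists ks, tilde ks /\ dot r As ks < u /\ dot r As ks = z)
      u (dot r As ks0)) as [z [[ks [h1 [h2 <-]]] hmax]]; [eauto|intros z [ks [_ [h <-]]]; lia|].
    exists ks; split; [exact h1|split; [|intros hn; exfalso; apply hn; exists ks0; auto]].
    intros _; split; [exact h2|intros ks' f1 f2; apply hmax; eauto].
  - destruct (Z_min_of_bounded (fun z => exists ks, tilde ks /\ dot r As ks = z)
      u (value kmin)) as [z [[ks [h1 <-]] hmin]]; [eauto|intros z [ks [h1 <-]]|].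
    + apply Z.nlt_ge; intros hl; apply NEx; exists ks; auto.
    + exists ks; split; [exact h1|split; [intros hh; contradiction|intros _ ks' f1; apply hmin; eauto]].
Qed.

Lemma phiP_iff x y1 y2 : phiP r N d (length As) D As x y1 y2 <->
  exists k, y2 = Z.of_nat (r k) /\ head_condition (x - y1) k.
Proof.
  split.
  - intros [ks [hP <-]]; exists (nth 0 ks 0%nat); split; [reflexivity|exact (isP_head _ _ hP)].
  - intros [k [-> hk]]; destruct (isP_exists (x - y1)) as [ks hP]; exists ks; split; [exact hP|].
    now rewrite (head_condition_unique _ _ _ (isP_head _ _ hP) hk).
Qed.

Lemma head_condition_congr u u' k :
  (chain_below r D N As k u <-> chain_below r D N As k u') ->
  (chain_below r D N As (k + d) u <-> chain_below r D N As (k + d) u') ->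
  (admissible k -> k <> kmin -> (chain_below r D N As (k - d) u <-> chain_below r D N As (k - d) u')) ->
  (head_condition u k <-> head_condition u' k).
Proof.
  intros E0 E1 E2; unfold head_condition.
  destruct (classic (admissible k)) as [hk|hk]; [|tauto].
  destruct (classic (k = kmin)) as [->|hne]; [tauto|].
  specialize (E2 hk hne); tauto.
Qed.

Lemma phiP_determined x x' y1 y2 :
  (shifted_family r D N As 0 x y1 y2 <-> shifted_family r D N As 0 x' y1 y2) ->
  (shifted_family r D N As d x y1 y2 <-> shifted_family r D N As d x' y1 y2) ->
  (lowered_family r D N As d x y1 y2 <-> lowered_family r D N As d x' y1 y2) ->
  (phiP r N d (length As) D As x y1 y2 <-> phiP r N d (length As) D As x' y1 y2).
Proof.
  intros E0 E1 E2; rewrite !phiP_iff.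
  enough (H : forall k, y2 = Z.of_nat (r k) -> (head_condition (x - y1) k <-> head_condition (x' - y1) k))
    by (split; intros [k [e hk]]; exists k; split; auto; apply (H k e); auto).
  intros k ->.
  assert (Hshift : forall j z, shifted_family r D N As j z y1 (Z.of_nat (r k)) <->
                               chain_below r D N As (k + j) (z - y1)).
  { intros j z; split; [intros [k' [e h]]; apply (r_inj r Hr) in e; subst k'; exact h|now exists k]. }
  apply head_condition_congr.
  - rewrite <- (Nat.add_0_r k), <- !Hshift; exact E0.
  - rewrite <- !Hshift; exact E1.
  - intros hk hne; destruct (admissible_pred k hk hne) as [_ e].
    assert (Hlow : forall z, lowered_family r D N As d z y1 (Z.of_nat (r k)) <->
                             chain_below r D N As (k - d) (z - y1)).
    { intros z; split; [intros [k' [e' h]]; apply (r_inj r Hr) in e'; now replace (k - d)%nat with k' by lia|].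
      intros h; exists (k - d)%nat; now rewrite e. }
    rewrite <- !Hlow; exact E2.
Qed.

End Head.

Lemma update_eq e i v : update e i v i = v.
Proof. unfold update; now rewrite Nat.eqb_refl. Qed.

Lemma update_neq e i v j : j <> i -> update e i v j = e j.
Proof. intros h; unfold update; destruct (Nat.eqb_spec j i); congruence. Qed.

Ltac simpl_update := repeat match goal with
  | H : context [update ?e ?i ?v ?i] |- _ => rewrite (update_eq e i v) in H
  | |- context [update ?e ?i ?v ?i] => rewrite (update_eq e i v)
  | H : context [update ?e ?i ?v ?j] |- _ => rewrite (update_neq e i v j) in H by lia
  | |- context [update ?e ?i ?v ?j] => rewrite (update_neq e i v j) by lia
  end.

(* Formulas below take a bound [b]: their free variables are [< b] and their bound variables are
   [>= b], so they can be nested without capture. *)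
Fixpoint term_below (m : nat) (t : term) : Prop :=
  match t with TVar i => (i < m)%nat | TPlus t1 t2 => term_below m t1 /\ term_below m t2 end.

Lemma term_below_mono m m' t : (m <= m')%nat -> term_below m t -> term_below m' t.
Proof. induction t; simpl; intuition lia. Qed.

Lemma eval_term_ext e e' m t : term_below m t -> (forall i, (i < m)%nat -> e i = e' i) ->
  eval_term e t = eval_term e' t.
Proof. induction t; simpl; intros h H; [auto|destruct h; rewrite IHt1, IHt2; auto]. Qed.

Lemma eval_term_update e m v t : term_below m t -> eval_term (update e m v) t = eval_term e t.
Proof. intros h; apply (eval_term_ext _ _ m); auto; intros i hi; apply update_neq; lia. Qed.

Fixpoint add_copies (n w : nat) (t : term) : term :=
  match n with O => t | S n' => TPlus (add_copies n' w t) (TVar w) end.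

Lemma eval_add_copies e n w t : eval_term e (add_copies n w t) = eval_term e t + Z.of_nat n * e w.
Proof. induction n; cbn [add_copies eval_term]; [lia|]; rewrite IHn, Nat2Z.inj_succ; ring. Qed.

Lemma term_below_add_copies m n w t : (w < m)%nat -> term_below m t -> term_below m (add_copies n w t).
Proof. intros; induction n; simpl; auto. Qed.

(* Terms have no constants or negation, so [c * w] is added to the left term when [c > 0] and
   [-c * w] to the right one when [c < 0]. *)
Lemma add_copies_split (L R c x y : Z) :
  L + Z.of_nat (Z.to_nat c) * x - (R + Z.of_nat (Z.to_nat (- c)) * x) + y = L - R + (c * x + y).
Proof.
  assert (H : Z.of_nat (Z.to_nat c) - Z.of_nat (Z.to_nat (- c)) = c) by lia.
  rewrite <- H at 3; ring.
Qed.

Definition succ_form (y z b : nat) : form :=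
  FAnd (FR (TVar y)) (FAnd (FR (TVar z)) (FAnd (FLt (TVar y) (TVar z))
   (FNot (FEx b (FAnd (FR (TVar b)) (FAnd (FLt (TVar y) (TVar b)) (FLt (TVar b) (TVar z)))))))).

Fixpoint iter_form (j : nat) (y z b : nat) : form :=
  match j with
  | O => FAnd (FR (TVar y)) (FEq (TVar y) (TVar z))
  | S j' => FEx b (FAnd (succ_form y b (S b)) (iter_form j' b z (S b)))
  end.

Definition least_form (x b : nat) : form :=
  FAnd (FR (TVar x)) (FNot (FEx b (FAnd (FR (TVar b)) (FLt (TVar b) (TVar x))))).

Definition ge_r_form (L v b : nat) : form :=
  FEx b (FEx (S b) (FAnd (least_form b (S (S b))) (FAnd (iter_form L b (S b) (S (S b)))
     (FNot (FLt (TVar v) (TVar (S b))))))).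

(* Adds [A (e w)] to [Lt - Rt] (walking along [R] from [e w]) and hands the result to [K]. *)
Fixpoint op_form (a : list Z) (w : nat) (Lt Rt : term) (b : nat) (K : term -> term -> nat -> form) : form :=
  match a with
  | [] => K Lt Rt b
  | c :: a' => FEx b (FAnd (succ_form w b (S b))
                 (op_form a' b (add_copies (Z.to_nat c) w Lt) (add_copies (Z.to_nat (- c)) w Rt) (S b) K))
  end.

Fixpoint chain_form (D N : nat) (As : list (list Z)) (v : nat) (Lt Rt : term) (b : nat) : form :=
  match As with
  | [] => FAnd (ge_r_form (N + D) v b) (FLt Lt Rt)
  | a :: As' => FEx b (FEx (S b) (FAnd (iter_form D b (S b) (S (S b)))
      (FAnd (FNot (FLt (TVar v) (TVar (S b))))
            (op_form a b Lt Rt (S (S b)) (chain_form D N As' b)))))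
  end.

Definition below_form (D N : nat) (a : list Z) (Cs : list (list Z)) (h vy vx b : nat) : form :=
  op_form a h (TVar vy) (TVar vx) b (chain_form D N Cs h).

Definition shifted_form D N a Cs (j : nat) (vx vy1 vy2 b : nat) : form :=
  FEx b (FAnd (iter_form j vy2 b (S b)) (below_form D N a Cs b vy1 vx (S b))).

Definition lowered_form D N a Cs (j : nat) (vx vy1 vy2 b : nat) : form :=
  FEx b (FAnd (iter_form j b vy2 (S b)) (below_form D N a Cs b vy1 vx (S b))).

Definition defines (r : nat -> nat) (f : nat -> nat -> nat -> nat -> form) (S : Z -> Z -> Z -> Prop) : Prop :=
  forall e vx vy1 vy2 b, (vx < b)%nat -> (vy1 < b)%nat -> (vy2 < b)%nat ->
    (sat r e (f vx vy1 vy2 b) <-> S (e vx) (e vy1) (e vy2)).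

Section Definability.

Variable r : nat -> nat.
Hypothesis Hr : strictly_increasing r.

Lemma succ_form_sem e y z b : (y < b)%nat -> (z < b)%nat ->
  (sat r e (succ_form y z b) <-> exists k, e y = Z.of_nat (r k) /\ e z = Z.of_nat (r (S k))).
Proof.
  intros hy hz; unfold succ_form; simpl; split.
  - intros [[k ey] [[j hj] [hlt hn]]]; exists k; split; [auto|].
    rewrite <- hj, <- ey in *.
    assert (k < j)%nat by (apply (r_lt_iff r Hr); lia).
    destruct (Nat.eq_dec j (S k)) as [->|hne]; [auto|exfalso; apply hn].
    exists (Z.of_nat (r (S k))); simpl_update.
    pose proof (Hr k (S k) ltac:(lia)); pose proof (Hr (S k) j ltac:(lia)).
    repeat split; [exists (S k); auto|lia|lia].
  - intros [k [ey ez]]; rewrite ey, ez; pose proof (Hr k (S k) ltac:(lia)).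
    split; [exists k; auto|split; [exists (S k); auto|split; [lia|]]].
    intros [v [[j hj] [h1 h2]]]; simpl_update; rewrite ey, ez in *; subst v.
    assert (k < j)%nat by (apply (r_lt_iff r Hr); lia).
    assert (j < S k)%nat by (apply (r_lt_iff r Hr); lia); lia.
Qed.

Lemma iter_form_sem j e y z b : (y < b)%nat -> (z < b)%nat ->
  (sat r e (iter_form j y z b) <-> exists k, e y = Z.of_nat (r k) /\ e z = Z.of_nat (r (k + j)%nat)).
Proof.
  revert e y z b; induction j as [|j IH]; intros e y z b hy hz; cbn -[succ_form].
  - setoid_rewrite Nat.add_0_r; split; [intros [[k hk] he]; exists k; split; congruence|].
    intros [k [h1 h2]]; split; [exists k; auto|congruence].
  - split.
    + intros [v [h1 h2]]; rewrite succ_form_sem in h1 by lia; rewrite IH in h2 by lia.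
      destruct h2 as [k [hk1 hk2]], h1 as [k' [h1 h1']]; simpl_update.
      rewrite hk1 in h1'; apply (r_inj r Hr) in h1'; subst k.
      exists k'; split; [auto|rewrite hk2; do 2 f_equal; lia].
    + intros [k [h1 h2]]; exists (Z.of_nat (r (S k))); split.
      * rewrite succ_form_sem by lia; exists k; simpl_update; auto.
      * rewrite IH by lia; exists (S k); simpl_update; split; [auto|rewrite h2; do 2 f_equal; lia].
Qed.

Lemma least_form_sem e x b : (x < b)%nat -> (sat r e (least_form x b) <-> e x = Z.of_nat (r 0%nat)).
Proof.
  intros hx; unfold least_form; cbn -[update]; split.
  - intros [[[|k] hk] hn]; [auto|exfalso; apply hn].
    exists (Z.of_nat (r 0%nat)); simpl_update; split; [exists 0%nat; auto|].
    rewrite <- hk; pose proof (Hr 0%nat (S k) ltac:(lia)); lia.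
  - intros h; split; [exists 0%nat; auto|]; intros [v [[j hj] hl]]; simpl_update; subst v.
    rewrite h in hl; destruct j as [|j]; [lia|pose proof (Hr 0%nat (S j) ltac:(lia)); lia].
Qed.

Lemma ge_r_form_sem L e v b : (v < b)%nat -> (sat r e (ge_r_form L v b) <-> Z.of_nat (r L) <= e v).
Proof.
  intros hv; unfold ge_r_form; cbn -[least_form iter_form update]; split.
  - intros [x [y [h1 [h2 h3]]]]; rewrite least_form_sem in h1 by lia; rewrite iter_form_sem in h2 by lia.
    simpl_update; destruct h2 as [k [hk1 hk2]].
    rewrite h1 in hk1; apply (r_inj r Hr) in hk1; subst k; simpl in hk2; lia.
  - intros h; exists (Z.of_nat (r 0%nat)), (Z.of_nat (r L)); split; [|split].
    + rewrite least_form_sem by lia; now simpl_update.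
    + rewrite iter_form_sem by lia; exists 0%nat; now simpl_update.
    + cbn; simpl_update; lia.
Qed.

(* [K] may read the variables [< b0] of the current environment [e0]; [KS] is its meaning as a
   predicate of [Lt - Rt]. *)
Lemma op_form_sem (K : term -> term -> nat -> form) (KS : Z -> Prop) (e0 : nat -> Z) (b0 : nat) :
  (forall e Lt Rt b, (b0 <= b)%nat -> term_below b Lt -> term_below b Rt ->
     (forall i, (i < b0)%nat -> e i = e0 i) ->
     (sat r e (K Lt Rt b) <-> KS (eval_term e Lt - eval_term e Rt))) ->
  forall a w b e Lt Rt j, (b0 <= b)%nat -> (w < b)%nat -> term_below b Lt -> term_below b Rt ->
   (forall i, (i < b0)%nat -> e i = e0 i) -> e w = Z.of_nat (r j) ->
   (sat r e (op_form a w Lt Rt b K) <-> KS (eval_term e Lt - eval_term e Rt + op_at r a j)).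
Proof.
  intros HK a; induction a as [|c a IH]; intros w b e Lt Rt j hb hw hL hR he hj.
  - simpl; rewrite HK by auto; now rewrite Z.add_0_r.
  - cbn [op_form sat].
    assert (Hstep : forall v, e w = Z.of_nat (r j) -> v = Z.of_nat (r (S j)) ->
      (sat r (update e b v)
         (op_form a b (add_copies (Z.to_nat c) w Lt) (add_copies (Z.to_nat (- c)) w Rt) (S b) K)
       <-> KS (eval_term e Lt - eval_term e Rt + op_at r (c :: a) j))).
    { intros v ej ->; rewrite (IH b (S b) (update e b _) _ _ (S j)).
      - rewrite !eval_add_copies, !eval_term_update by auto; simpl_update; rewrite ej.
        cbn [op_at]; now rewrite add_copies_split.
      - lia.
      - lia.
      - apply term_below_add_copies; [lia|]; apply (term_below_mono b); auto.
      - apply term_below_add_copies; [lia|]; apply (term_below_mono b); auto.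
      - intros i hi; simpl_update; auto.
      - now simpl_update. }
    split.
    + intros [v [h1 h2]]; rewrite succ_form_sem in h1 by lia.
      destruct h1 as [k [hk1 hk2]]; simpl_update.
      rewrite hj in hk1; apply (r_inj r Hr) in hk1; subst k.
      exact (proj1 (Hstep v hj hk2) h2).
    + intros h; exists (Z.of_nat (r (S j))); split; [|exact (proj2 (Hstep _ hj eq_refl) h)].
      rewrite succ_form_sem by lia; exists j; now simpl_update.
Qed.

Lemma chain_form_sem D N As : forall e v Lt Rt b k0, (v < b)%nat -> term_below b Lt -> term_below b Rt ->
  e v = Z.of_nat (r k0) ->
  (sat r e (chain_form D N As v Lt Rt b) <->
   exists ks, length ks = length As /\ gap_chain D N (k0 :: ks) /\
              eval_term e Lt + dot r As ks < eval_term e Rt).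
Proof.
  induction As as [|a As IH]; intros e v Lt Rt b k0 hv hL hR hk0.
  - cbn -[ge_r_form]; rewrite ge_r_form_sem, hk0, <- Nat2Z.inj_le, (r_le_iff r Hr) by lia.
    split; [intros [h1 h2]; exists []; simpl; repeat split; auto; lia|].
    intros [[|] [hl [hc h]]]; [simpl in *; split; [auto|lia]|discriminate].
  - assert (Hop : forall x y k1, x = Z.of_nat (r k1) ->
      (sat r (update (update e b x) (S b) y) (op_form a b Lt Rt (S (S b)) (chain_form D N As b)) <->
       exists ks, length ks = length As /\ gap_chain D N (k1 :: ks) /\
                  eval_term e Lt + dot r (a :: As) (k1 :: ks) < eval_term e Rt)).
    { intros x y k1 hx; set (e' := update (update e b x) (S b) y).
      assert (he' : e' b = Z.of_nat (r k1)) by (unfold e'; now simpl_update).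
      rewrite (op_form_sem (chain_form D N As b)
        (fun X => exists ks, length ks = length As /\ gap_chain D N (k1 :: ks) /\ X + dot r As ks < 0)
        e' (S (S b))) with (j := k1); try (lia || auto || apply (term_below_mono b); auto || fail).
      - unfold e'; rewrite !eval_term_update by (try apply (term_below_mono b); auto).
        cbn [dot]; split; intros [ks [? [? ?]]]; exists ks; repeat split; auto; lia.
      - intros e'' Lt' Rt' b'' hb hL' hR' he''.
        rewrite (IH e'' b Lt' Rt' b'' k1) by (auto; try lia; rewrite he'' by lia; exact he').
        split; intros [ks [? [? ?]]]; exists ks; repeat split; auto; lia. }
    cbn -[iter_form op_form update dot]; split.
    + intros [x [y [h1 [h2 h3]]]]; rewrite iter_form_sem in h1 by lia.
      destruct h1 as [k1 [hx hy]]; simpl_update; subst x y.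
      destruct (proj1 (Hop _ _ k1 eq_refl) h3) as [ks [hl [hc h]]].
      rewrite hk0, <- Nat2Z.inj_lt, (r_lt_iff r Hr) in h2.
      exists (k1 :: ks); simpl; repeat split; auto; lia.
    + intros [[|k1 ks] [hl [hc h]]]; [discriminate|]; destruct hc as [hgap hc].
      exists (Z.of_nat (r k1)), (Z.of_nat (r (k1 + D)%nat)); split; [|split].
      * rewrite iter_form_sem by lia; exists k1; now simpl_update.
      * cbn; simpl_update; rewrite hk0, <- Nat2Z.inj_lt, (r_lt_iff r Hr); lia.
      * apply (Hop _ _ k1 eq_refl); exists ks; simpl in *; repeat split; auto.
Qed.

Lemma below_form_sem D N a Cs e h vy vx b k : (h < b)%nat -> (vy < b)%nat -> (vx < b)%nat ->
  e h = Z.of_nat (r k) ->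
  (sat r e (below_form D N a Cs h vy vx b) <-> chain_below r D N (a :: Cs) k (e vx - e vy)).
Proof.
  intros hh hy hx hk; unfold below_form.
  rewrite (op_form_sem (chain_form D N Cs h)
    (fun X => exists ks, length ks = length Cs /\ gap_chain D N (k :: ks) /\ X + dot r Cs ks < 0)
    e b) with (j := k); simpl; auto; try lia.
  - split; [intros [ks [hl [hc h']]]; exists (k :: ks); simpl; repeat split; auto; lia|].
    intros [[|k' ks] [hc [hl [hk' h']]]]; [discriminate|]; simpl in *; subst k'.
    exists ks; repeat split; auto; lia.
  - intros e' Lt Rt b' hb hL hR he'.
    rewrite (chain_form_sem D N Cs e' h Lt Rt b' k) by (auto; try lia; rewrite he' by lia; exact hk).
    split; intros [ks [? [? ?]]]; exists ks; repeat split; auto; lia.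
Qed.

Lemma shifted_form_defines D N a Cs j :
  defines r (shifted_form D N a Cs j) (shifted_family r D N (a :: Cs) j).
Proof.
  intros e vx vy1 vy2 b hx hy1 hy2; unfold shifted_form; cbn -[iter_form below_form update]; split.
  - intros [v [h1 h2]]; rewrite iter_form_sem in h1 by lia; destruct h1 as [k [hk1 hk2]].
    rewrite (below_form_sem _ _ _ _ _ _ _ _ _ (k + j)) in h2 by (auto; lia).
    simpl_update; exists k; auto.
  - intros [k [hk h]]; exists (Z.of_nat (r (k + j)%nat)); split.
    + rewrite iter_form_sem by lia; exists k; now simpl_update.
    + rewrite (below_form_sem _ _ _ _ _ _ _ _ _ (k + j)) by (simpl_update; auto; lia).
      now simpl_update.
Qed.

Lemma lowered_form_defines D N a Cs j :
  defines r (lowered_form D N a Cs j) (lowered_family r D N (a :: Cs) j).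
Proof.
  intros e vx vy1 vy2 b hx hy1 hy2; unfold lowered_form; cbn -[iter_form below_form update]; split.
  - intros [v [h1 h2]]; rewrite iter_form_sem in h1 by lia; destruct h1 as [k [hk1 hk2]].
    rewrite (below_form_sem _ _ _ _ _ _ _ _ _ k) in h2 by (auto; lia).
    simpl_update; exists k; auto.
  - intros [k [hk h]]; exists (Z.of_nat (r k)); split.
    + rewrite iter_form_sem by lia; exists k; now simpl_update.
    + rewrite (below_form_sem _ _ _ _ _ _ _ _ _ k) by (simpl_update; auto; lia).
      now simpl_update.
Qed.

End Definability.

Definition nested (T : Z -> Z -> Z -> Prop) : Prop :=
  forall p p' : Z * Z, (forall x, T x (fst p) (snd p) -> T x (fst p') (snd p')) \/
                       (forall x, T x (fst p') (snd p') -> T x (fst p) (snd p)).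

Lemma upward_closed_nested S : upward_closed S -> nested S.
Proof.
  intros HS p p'; destruct (classic (forall x, S x (fst p) (snd p) -> S x (fst p') (snd p'))) as [|h];
    [now left|right].
  apply not_all_ex_not in h; destruct h as [x0 h]; apply imply_to_and in h; destruct h as [h1 h2].
  intros x hx; destruct (Z_le_gt_dec x x0); [exfalso; apply h2; apply (HS x); auto|apply (HS x0); auto; lia].
Qed.

Lemma upward_closed_nested_not S : upward_closed S -> nested (fun x y1 y2 => ~ S x y1 y2).
Proof. intros HS p p'; destruct (upward_closed_nested S HS p' p); [left|right]; firstorder. Qed.

Lemma list_has_least {A} (le : A -> A -> Prop) (P : A -> Prop)
  (tot : forall x y, le x y \/ le y x) (trans : forall x y z, le x y -> le y z -> le x z)
  (refl : forall x, le x x) (l : list A) :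
  (exists b, In b l /\ P b) -> exists b, In b l /\ P b /\ forall b', In b' l -> P b' -> le b b'.
Proof.
  induction l as [|x l IH]; intros [b [hb hp]]; [destruct hb|].
  destruct (classic (exists b, In b l /\ P b)) as [E|NE].
  - destruct (IH E) as [m [hm [hpm hmin]]].
    destruct (classic (P x)) as [px|npx]; [destruct (tot x m) as [h|h]|].
    + exists x; repeat split; [now left|auto|intros b' [<-|hb'] hp'; eauto].
    + exists m; repeat split; [now right|auto|intros b' [<-|hb'] hp'; auto].
    + exists m; repeat split; [now right|auto|intros b' [<-|hb'] hp'; [contradiction|auto]].
  - destruct hb as [<-|hb]; [|exfalso; apply NE; eauto].
    exists x; repeat split; [now left|auto|intros b' [<-|hb'] hp'; [auto|exfalso; apply NE; eauto]].
Qed.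

(* A parameter triple [(p0, p1, p2)] stands for the guard [p1 = p2 -> T x p0]: it selects the
   least [p0] in [B] with [T a p0] when there is one, and is switched off by [p1 <> p2] otherwise. *)
Definition guard_holds (T : Z -> Z -> Z -> Prop) (x : Z) (p0 p1 p2 : Z * Z) : Prop :=
  p1 = p2 -> T x (fst p0) (snd p0).

Lemma guard_choice T a (B : list (Z * Z)) b0 b1 : nested T -> In b0 B -> In b1 B -> b0 <> b1 ->
  exists p0 p1 p2, In p0 B /\ In p1 B /\ In p2 B /\ guard_holds T a p0 p1 p2 /\
    forall a', guard_holds T a' p0 p1 p2 -> forall b, In b B -> T a (fst b) (snd b) -> T a' (fst b) (snd b).
Proof.
  intros HT h0 h1 hne.
  set (le := fun p p' : Z * Z => forall x, T x (fst p) (snd p) -> T x (fst p') (snd p')).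
  destruct (classic (exists b, In b B /\ T a (fst b) (snd b))) as [E|NE].
  - destruct (list_has_least le _ HT (fun p q s h h' x hx => h' x (h x hx)) (fun p x hx => hx) B E)
      as [m [hm [hp hmin]]].
    exists m, m, m; do 3 (split; [exact hm|]); split; [intros _; exact hp|].
    intros a' h b hb hab; exact (hmin b hb hab a' (h eq_refl)).
  - exists b0, b0, b1; do 3 (split; [assumption|]); split; [intros e; contradiction|].
    intros a' _ b hb hab; exfalso; eauto.
Qed.

Definition param_fst (i : nat) : nat := S (2 * i).
Definition param_snd (i : nat) : nat := S (2 * i + 1).

Lemma env_param a c i : (i < length c)%nat ->
  env a c (param_fst i) = fst (nth i c (0, 0)) /\ env a c (param_snd i) = snd (nth i c (0, 0)).
Proof.
  intros h; unfold env, param_fst, param_snd.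
  replace (Nat.div (2 * i) 2) with i by (apply (Nat.div_unique _ _ _ 0%nat); lia).
  replace (Nat.div (2 * i + 1) 2) with i by (apply (Nat.div_unique _ _ _ 1%nat); lia).
  replace (Nat.modulo (2 * i) 2) with 0%nat by (apply (Nat.mod_unique _ _ i); lia).
  replace (Nat.modulo (2 * i + 1) 2) with 1%nat by (apply (Nat.mod_unique _ _ i); lia).
  destruct (nth_error c i) as [[y1 y2]|] eqn:E; [|apply nth_error_None in E; lia].
  now rewrite (nth_error_nth _ _ _ E).
Qed.

Definition family_form : Type := nat -> nat -> nat -> nat -> form.

Definition guard_form (bound i : nat) (f : family_form) : form :=
  FNot (FAnd (FEq (TVar (param_fst (i + 1))) (TVar (param_fst (i + 2))))
    (FAnd (FEq (TVar (param_snd (i + 1))) (TVar (param_snd (i + 2))))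
      (FNot (f 0%nat (param_fst i) (param_snd i) bound)))).

Fixpoint guards_form (bound i : nat) (fs : list family_form) : form :=
  match fs with
  | [] => FEq (TVar 0) (TVar 0)
  | f :: fs' => FAnd (guard_form bound i f) (guards_form bound (i + 3) fs')
  end.

Fixpoint guards_hold (Ts : list (Z -> Z -> Z -> Prop)) (x : Z) (c : list (Z * Z)) : Prop :=
  match Ts, c with
  | [], _ => True
  | T :: Ts', p0 :: p1 :: p2 :: c' => guard_holds T x p0 p1 p2 /\ guards_hold Ts' x c'
  | _, _ => False
  end.

Lemma pair_eq_iff (p p' : Z * Z) : p = p' <-> fst p = fst p' /\ snd p = snd p'.
Proof. destruct p, p'; simpl; split; [intros h; now inversion h|intros [-> ->]; auto]. Qed.

Section HonestDefinitions.

Variable r : nat -> nat.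

Lemma guards_form_sem bound (Ls : list (family_form * (Z -> Z -> Z -> Prop))) a pre c :
  Forall (fun L => defines r (fst L) (snd L)) Ls -> length c = (3 * length Ls)%nat ->
  (2 * (length pre + length c) < bound)%nat ->
  (sat r (env a (pre ++ c)) (guards_form bound (length pre) (map fst Ls)) <-> guards_hold (map snd Ls) a c).
Proof.
  revert pre c; induction Ls as [|[f T] Ls IH]; intros pre c HLs hl hb; [simpl; tauto|].
  inversion HLs as [|? ? Hf HLs']; subst; simpl in Hf.
  destruct c as [|p0 [|p1 [|p2 c]]]; simpl in hl, hb; try lia.
  cbn [map guards_form guards_hold sat].
  replace (length pre + 3)%nat with (length (pre ++ [p0; p1; p2])) by (rewrite length_app; simpl; lia).
  replace (pre ++ p0 :: p1 :: p2 :: c) with ((pre ++ [p0; p1; p2]) ++ c) at 2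
    by now rewrite <- app_assoc.
  rewrite IH by (auto; rewrite ?length_app; simpl in *; lia).
  unfold guard_form, defines in *; cbn [sat eval_term].
  rewrite Hf by (unfold param_fst, param_snd; lia); unfold guard_holds.
  set (c' := pre ++ p0 :: p1 :: p2 :: c) in *.
  assert (Hlen : length c' = (length pre + 3 + length c)%nat) by (unfold c'; rewrite length_app; simpl; lia).
  destruct (env_param a c' (length pre)) as [-> ->]; [lia|].
  destruct (env_param a c' (length pre + 1)) as [-> ->]; [lia|].
  destruct (env_param a c' (length pre + 2)) as [-> ->]; [lia|].
  assert (Hp : forall t p, nth t (p0 :: p1 :: p2 :: c) (0, 0) = p -> nth (length pre + t) c' (0, 0) = p)
    by (intros t p <-; unfold c'; rewrite app_nth2, Nat.add_comm, Nat.add_sub by lia; reflexivity).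
  pose proof (Hp 0%nat p0 eq_refl) as E0; rewrite Nat.add_0_r in E0.
  rewrite E0, (Hp 1%nat p1), (Hp 2%nat p2) by reflexivity.
  rewrite (pair_eq_iff p1 p2).
  split; intros [h1 h2]; split; auto; [intros [e1 e2]; apply NNPP; auto|tauto].
Qed.

Lemma guards_choice (Ts : list (Z -> Z -> Z -> Prop)) a B b0 b1 :
  Forall nested Ts -> In b0 B -> In b1 B -> b0 <> b1 ->
  exists c, length c = (3 * length Ts)%nat /\ (forall y, In y c -> In y B) /\ guards_hold Ts a c /\
    forall a', guards_hold Ts a' c ->
      Forall (fun T => forall b, In b B -> T a (fst b) (snd b) -> T a' (fst b) (snd b)) Ts.
Proof.
  intros HT h0 h1 hne; induction HT as [|T Ts hT HT IH].
  - exists []; simpl; repeat split; auto; tauto.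
  - destruct (guard_choice T a B b0 b1 hT h0 h1 hne) as [p0 [p1 [p2 [i0 [i1 [i2 [hg hmin]]]]]]].
    destruct IH as [c [hl [hin [hh hall]]]].
    exists (p0 :: p1 :: p2 :: c); simpl; repeat split; auto; [lia| |].
    + intros y [<-|[<-|[<-|hy]]]; auto.
    + intros a' [hg' hh']; constructor; auto.
Qed.

Definition negate_family (F : family_form * (Z -> Z -> Z -> Prop)) : family_form * (Z -> Z -> Z -> Prop) :=
  (fun vx vy1 vy2 b => FNot (fst F vx vy1 vy2 b), fun x y1 y2 => ~ snd F x y1 y2).

Lemma strong_honest_def_of_families phi (Fs : list (family_form * (Z -> Z -> Z -> Prop))) :
  (forall F, In F Fs -> defines r (fst F) (snd F) /\ upward_closed (snd F)) ->
  (forall x x' y1 y2, (forall F, In F Fs -> (snd F x y1 y2 <-> snd F x' y1 y2)) ->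
     (phi x y1 y2 <-> phi x' y1 y2)) ->
  has_strong_honest_def r phi.
Proof.
  intros HFs Hdet.
  set (Ls := flat_map (fun F => [F; negate_family F]) Fs).
  assert (HLs : forall L, In L Ls -> defines r (fst L) (snd L) /\ nested (snd L)).
  { intros L hL; apply in_flat_map in hL; destruct hL as [F [hF hL]].
    destruct (HFs F hF) as [hdef hup].
    destruct hL as [<-|[<-|[]]]; split; auto using upward_closed_nested.
    - intros e vx vy1 vy2 b h1 h2 h3; simpl; now rewrite (hdef e vx vy1 vy2 b).
    - exact (upward_closed_nested_not _ hup). }
  exists (3 * length Ls)%nat, (guards_form (S (2 * (3 * length Ls))) 0 (map fst Ls)).
  intros a B ND LB.
  destruct B as [|b0 [|b1 B']]; simpl in LB; try lia.
  assert (hne : b0 <> b1) by (inversion ND; intros <-; simpl in *; tauto).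
  destruct (guards_choice (map snd Ls) a (b0 :: b1 :: B') b0 b1) as [c [hl [hin [hhold hall]]]];
    [|now left|now right; left|exact hne|].
  { apply Forall_forall; intros T hT; apply in_map_iff in hT; destruct hT as [L [<- hL]]; apply HLs, hL. }
  rewrite length_map in hl.
  assert (Hsem : forall x, sat r (env x c) (guards_form (S (2 * (3 * length Ls))) 0 (map fst Ls))
                           <-> guards_hold (map snd Ls) x c)
    by (intros x; apply (guards_form_sem _ Ls x []);
        [apply Forall_forall; intros L hL; apply HLs, hL|auto|simpl; lia]).
  exists c; split; [exact hl|split; [exact hin|split; [apply Hsem, hhold|]]].
  intros a' ha' b hb; specialize (hall a' (proj1 (Hsem a') ha')); rewrite Forall_forall in hall.
  apply Hdet; intros F hF.
  assert (Hin : forall L, In L [F; negate_family F] -> In (snd L) (map snd Ls))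
    by (intros L hL; apply in_map, in_flat_map; eauto).
  split; [apply (hall _ (Hin F (or_introl eq_refl))), hb|].
  intros h'; apply NNPP; intros hn; exact (hall _ (Hin _ (or_intror (or_introl eq_refl))) b hb hn h').
Qed.

End HonestDefinitions.

Theorem mainTheorem16 :
  forall r : nat -> nat,
    strictly_increasing r ->
    congruence_periodic r ->
    sparse r ->
  forall d : nat, (1 <= d)%nat ->
  forall N : nat,  (* R~ = { r_{N + d t} : t in N } *)
  forall n : nat, (1 <= n)%nat ->
  forall As : list (list Z), length As = n ->
    (forall a, In a As -> ~ op_zero r a) ->
  exists Delta0 : nat,
    forall Delta : nat, (Delta0 <= Delta)%nat -> (exists q : nat, Delta = (d * q)%nat) ->
      has_strong_honest_def r (phiP r N d n Delta As).
Proof.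
  intros r Hr _ Hs d hd N n hn As <- Hnz.
  destruct (op_signs_exist r As Hs Hnz) as [ss HF].
  destruct (dominated_eventually r Hr Hs As (op_sign_cases r As ss HF)) as [D0 HD0].
  exists D0; intros D hD [q hq].
  destruct As as [|a Cs]; [simpl in hn; lia|].
  apply (strong_honest_def_of_families r _
    [(shifted_form D N a Cs 0, shifted_family r D N (a :: Cs) 0);
     (shifted_form D N a Cs d, shifted_family r D N (a :: Cs) d);
     (lowered_form D N a Cs d, lowered_family r D N (a :: Cs) d)]).
  - intros F [<-|[<-|[<-|[]]]]; simpl;
      auto using shifted_form_defines, lowered_form_defines, shifted_family_upward, lowered_family_upward.
  - intros x x' y1 y2 H.
    apply (phiP_determined r Hr d q D N hd hq a Cs ss HF (HD0 D N hD));
      [exact (H _ (or_introl eq_refl))|exact (H _ (or_intror (or_introl eq_refl)))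
      |exact (H _ (or_intror (or_intror (or_introl eq_refl))))].
Qed.
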